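(* Let $\langle \Lambda, \mathcal{S}\rangle$ be a measurable space and let $P_{00}, P_{0+}, P_{+0}, P_{++}$ be four probability measures on it that satisfy the Preparation Uninformativeness Condition, i.e. there is a measure $Q$ dominating all four, with densities $\mu_{xy} = dP_{xy}/dQ$ ($x,y\in\{0,+\}$) such that for all $\lambda\in\Lambda$, $$\mu_{00}(\lambda)\,\mu_{++}(\lambda) = \mu_{0+}(\lambda)\,\mu_{+0}(\lambda).$$ Let $\varepsilon>0$ and suppose there is an $m$-outcome experiment $E$, given by measurable functions $p_k:\Lambda\to[0,1]$, $k\in K$, $|K|=m$, with $\sum_{k\in K}p_k(\lambda)=1$ for all $\lambda$, such that each outcome $k$ is $\varepsilon$-precluded by some $P_{xy}$, i.e. for each $k$ there exist $x,y\in\{0,+\}$ with $\int_\Lambda p_k\,dP_{xy}\le\varepsilon$. Then $$\delta(P_{00},P_{++}) \ge H(P_{00},P_{++})^2 \ge 1-2\sqrt{m\varepsilon}$$ and $$\delta(P_{0+},P_{+0}) \ge H(P_{0+},P_{+0})^2 \ge 1-2\sqrt{m\varepsilon}.$$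
   Context: For probability measures $P,P'$ on $\langle\Lambda,\mathcal{S}\rangle$ with densities $p,q$ with respect to a common dominating measure $\nu$: the total variation distance is $\delta(P,P')=\sup_{A\in\mathcal{S}}|P(A)-P'(A)|=1-\int_\Lambda\min(p,q)\,d\nu$, and the Hellinger distance $H(P,P')$ is defined by $H(P,P')^2=\frac12\int_\Lambda(\sqrt p-\sqrt q)^2\,d\nu = 1-\int_\Lambda\sqrt{pq}\,d\nu$. *)

From HB Require Import structures.
From mathcomp Require Import all_boot all_order all_algebra.
From mathcomp Require Import all_classical all_reals all_analysis.
Set Implicit Arguments. Unset Strict Implicit. Unset Printing Implicit Defensive.
Import Order.TTheory GRing.Theory Num.Theory.
Local Open Scope classical_set_scope.
Local Open Scope ring_scope.
Local Open Scope ereal_scope.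

Definition tv_dist (d : measure_display) (T : measurableType d) (R : realType)
  (P P' : probability T R) : \bar R :=
  ereal_sup [set `|P A - P' A| | A in measurable].

(* Squared Hellinger distance computed from densities p, q w.r.t. a common
   dominating measure nu:  H^2 = 1 - \int sqrt(p q) dnu. *)
Definition hellinger2 (d : measure_display) (T : measurableType d) (R : realType)
  (nu : {measure set T -> \bar R}) (p q : T -> R) : \bar R :=
  1 - \int[nu]_t (Num.sqrt (p t * q t))%:E.

Definition is_density (d : measure_display) (T : measurableType d) (R : realType)
  (nu : {measure set T -> \bar R}) (P : probability T R) (f : T -> R) : Prop :=
  [/\ measurable_fun setT f, (forall t, (0 <= f t)%R) &
      forall A, measurable A -> P A = \int[nu]_(t in A) (f t)%:E].

From HB Require Import structures.
From mathcomp Require Import all_boot all_order all_algebra.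
From mathcomp Require Import all_classical all_reals all_analysis.
From mathcomp Require Import measurable_realfun ring lra.
Import Order.TTheory GRing.Theory Num.Theory.
Local Open Scope classical_set_scope.
Local Open Scope ring_scope.
Local Open Scope ereal_scope.

(* Taking A = {mu' < mu}, the overlap \int min(mu, mu') dQ equals
   1 - (P A - P' A), and min(mu, mu') <= sqrt(mu mu'), whence H^2 <= delta.
   Under the PUC, sqrt(mu_00 mu_++) = sqrt(mu_0+ mu_+0) = sqrt(mu_xy mu_x'y')
   for every (x, y), with x', y' the opposite labels, so both pairs have the
   same Hellinger affinity, and by AM-GM it is at most
   mu_xy / r + (r / 4) (mu_00 + mu_0+ + mu_+0 + mu_++).  Averaging these bounds
   with weights p_k, where (x, y) is a pair precluding outcome k, and
   integrating bounds the affinity by m eps / r + r, i.e. by 2 sqrt(m eps)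
   for r = sqrt(m eps). *)

Section real_inequalities.
Context {R : rcfType}.
Local Open Scope ring_scope.

Lemma min_le_sqrt_mul (a b : R) : 0 <= a -> 0 <= b ->
  Num.min a b <= Num.sqrt (a * b).
Proof.
move=> a0 b0; have m0 : 0 <= Num.min a b by rewrite le_min a0 b0.
rewrite -(ger0_norm m0) -sqrtr_sqr ler_wsqrtr // expr2.
by rewrite ler_pM // ge_min lexx ?orbT.
Qed.

Lemma sqrt_mul_le_scaled (r X Y : R) : 0 < r -> 0 <= X -> 0 <= Y ->
  Num.sqrt (X * Y) <= X / r + r / 4 * Y.
Proof.
move=> r0 X0 Y0; rewrite sqrtrM // -subr_ge0.
have := sqr_sqrtr X0; have := sqr_sqrtr Y0.
set u := Num.sqrt X; set v := Num.sqrt Y => <- <-.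
have -> : u ^+ 2 / r + r / 4 * v ^+ 2 - u * v = (u - r / 2 * v) ^+ 2 / r.
  by field; rewrite gt_eqF.
by rewrite divr_ge0 ?sqr_ge0 ?ltW.
Qed.

End real_inequalities.

Section density.
Context {d : measure_display} {T : measurableType d} {R : realType}
  {Q : {measure set T -> \bar R}} {P : probability T R} {f : T -> R}.
Hypothesis Pf : is_density Q P f.

Let mf : measurable_fun setT f. Proof. by case: Pf. Qed.
Let f0 t : (0 <= f t)%R. Proof. by case: Pf. Qed.

Lemma integral_density_setT : \int[Q]_t (f t)%:E = 1.
Proof. by case: Pf => _ _ <-; rewrite ?probability_setT. Qed.

Lemma integral_density_indic (E A : set T) : measurable E -> measurable A ->
  \int[Q]_(x in E) ((\1_A x)%:E * (f x)%:E) = P (A `&` E).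
Proof.
move=> mE mA; case: Pf => _ _ ->; last exact: measurableI.
rewrite setIC integral_mkcondr; apply: eq_integral => x _.
by rewrite epatch_indic /= muleC.
Qed.

Import HBNNSimple.

Lemma integral_density_nnsfun (E : set T) (h : {nnsfun T >-> R}) :
  measurable E ->
  \int[Q]_(x in E) ((h x)%:E * (f x)%:E) = \int[P]_(x in E) (h x)%:E.
Proof.
move=> mE.
have mI y : measurable_fun E (\1_(h @^-1` [set y]) : T -> R).
  exact/measurable_funTS/measurable_indic/measurable_funPTI.
have myI y : measurable_fun E (fun x => (y * \1_(h @^-1` [set y]) x)%:E).
  by apply/measurable_EFinP/measurable_funM.
have hE x : (h x)%:E = \sum_(y \in range h) (y * \1_(h @^-1` [set y]) x)%:E.
  by rewrite fsumEFin // -fimfunE.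
transitivity (\sum_(y \in range h) y%:E * P (h @^-1` [set y] `&` E)).
  under eq_integral => x _.
    rewrite hE ge0_mule_fsuml; last by move=> y; exact: nnfun_muleindic_ge0.
    over.
  rewrite ge0_integral_fsum //; first last.
  - by move=> y x _; rewrite mule_ge0 ?lee_fin //; exact: nnfun_muleindic_ge0.
  - move=> y; apply: emeasurable_funM => //.
    exact/measurable_EFinP/measurable_funTS.
  apply: eq_fsbigr => y /[!inE] -[x _ <-].
  under eq_integral do rewrite EFinM -muleA.
  rewrite ge0_integralZl ?integral_density_indic ?lee_fin //.
  - by apply: emeasurable_funM; exact/measurable_EFinP/measurable_funTS.
  - by move=> t _; rewrite mule_ge0 ?lee_fin.
under eq_integral => x _ do rewrite hE.
rewrite ge0_integral_fsum //; first last.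
- by move=> y x _; exact: nnfun_muleindic_ge0.
apply: eq_fsbigr => y _.
by rewrite integralZl_indic_nnsfun // integral_indic // measurable_funPTI.
Qed.

Lemma integral_density (E : set T) (g : T -> \bar R) :
    measurable E -> measurable_fun E g -> (forall x, 0 <= g x) ->
  \int[Q]_(x in E) (g x * (f x)%:E) = \int[P]_(x in E) g x.
Proof.
move=> mE mg g0; pose h := nnsfun_approx mE mg.
have hg x : E x -> (EFin \o h n) x @[n --> \oo] --> g x.
  by move=> Ex; exact: cvg_nnsfun_approx.
have mh n : measurable_fun E (EFin \o h n).
  exact/measurable_EFinP/measurable_funTS/measurable_funPT.
have nd_h x m n : (m <= n)%N -> (h m x <= h n x)%R.
  by move=> mn; exact/lefP/nd_nnsfun_approx.
have -> : \int[P]_(x in E) g x =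
    lim (\int[P]_(x in E) (EFin \o h n) x @[n --> \oo]).
  rewrite -monotone_convergence //; last first.
  - by move=> x _ m n mn; rewrite lee_fin nd_h.
  - by move=> n x _; rewrite lee_fin.
  by apply: eq_integral => x /[!inE] Ex; apply/esym/cvg_lim => //; exact: hg.
have -> : \int[Q]_(x in E) (g x * (f x)%:E) =
    lim (\int[Q]_(x in E) ((EFin \o h n) x * (f x)%:E) @[n --> \oo]).
  rewrite -monotone_convergence //; last first.
  - by move=> x _ m n mn; rewrite lee_wpmul2r ?lee_fin ?nd_h.
  - by move=> n x _; rewrite mule_ge0 ?lee_fin.
  - move=> n; apply: emeasurable_funM => //.
    exact/measurable_EFinP/measurable_funTS.
  apply: eq_integral => x /[!inE] Ex; apply/esym/cvg_lim => //.
  by apply: cvgeZr => //; exact: hg.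
by under eq_fun => n do rewrite (integral_density_nnsfun E (h n) mE).
Qed.

End density.

Lemma probability_setT_neq0 {d : measure_display} {T : measurableType d}
  {R : realType} (P : probability T R) : [set: T] !=set0.
Proof.
apply/set0P/eqP => T0; have := probability_setT P.
by rewrite T0 measure0 => -[] /eqP; rewrite eq_sym oner_eq0.
Qed.

Lemma measurable_sqrt_mul {d : measure_display} {T : measurableType d}
  {R : realType} (f g : T -> R) :
  measurable_fun setT f -> measurable_fun setT g ->
  measurable_fun setT (fun t => (Num.sqrt (f t * g t))%:E).
Proof.
move=> mf mg; apply/measurable_EFinP/measurableT_comp.
  exact: continuous_measurable_fun (@sqrt_continuous R).
exact: measurable_funM.
Qed.

Section hellinger_le_tv.
Context {d : measure_display} {T : measurableType d} {R : realType}
  {Q : {measure set T -> \bar R}} {P1 P2 : probability T R} {f g : T -> R}.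
Hypotheses (P1f : is_density Q P1 f) (P2g : is_density Q P2 g).

Let A := [set t | (g t < f t)%R].

Let mA : measurable A.
Proof.
case: P1f P2g => mf _ _ [mg _ _].
by rewrite -[A]setTI; exact: measurable_fun_ltr.
Qed.

Lemma integral_min_densities :
  \int[Q]_t (Num.min (f t) (g t))%:E = P2 A + P1 (~` A).
Proof.
case: P1f P2g => mf f0 If [mg g0 Ig].
have min0 t : 0 <= (Num.min (f t) (g t))%:E by rewrite lee_fin le_min f0 g0.
rewrite -(setUCr A) ge0_integral_setU //; first last.
- by rewrite disj_set2E setICr.
- by rewrite setUCr; exact/measurable_EFinP/measurable_minr.
- exact: measurableC.
rewrite Ig // If; last exact: measurableC.
congr (_ + _); apply: eq_integral => t.
  by rewrite inE /A /= => /ltW gf; rewrite (min_idPr gf).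
by rewrite inE /A /= => /negP; rewrite -leNgt => fg; rewrite (min_idPl fg).
Qed.

Lemma hellinger2_le_tv_dist : hellinger2 Q f g <= tv_dist P1 P2.
Proof.
case: P1f P2g => mf f0 _ [mg g0 _].
have min_le_sqrt : P2 A + P1 (~` A) <= \int[Q]_t (Num.sqrt (f t * g t))%:E.
  rewrite -integral_min_densities; apply: ge0_le_integral => //.
  - by move=> t _; rewrite lee_fin le_min f0 g0.
  - exact/measurable_EFinP/measurable_minr.
  - exact: measurable_sqrt_mul.
  - by move=> t _; rewrite lee_fin min_le_sqrt_mul.
have tv : `|P1 A - P2 A| <= tv_dist P1 P2 by apply: ereal_sup_ubound; exists A.
apply: le_trans tv.
rewrite /hellinger2 probability_setC // in min_le_sqrt *.
rewrite -(fineK (fin_num_measure P1 _ mA)) -(fineK (fin_num_measure P2 _ mA))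
  in min_le_sqrt *.
apply: le_trans (leeB (lexx 1) min_le_sqrt) _.
by rewrite -!EFinB lee_fin; apply: le_trans (ler_norm _); lra.
Qed.

End hellinger_le_tv.

Section preparation_uninformative.
Context {d : measure_display} {T : measurableType d} {R : realType}.
Context {P : bool -> bool -> probability T R} {Q : {measure set T -> \bar R}}
  {mu : bool -> bool -> T -> R}.
Hypotheses (Pmu : forall x y, is_density Q (P x y) (mu x y))
  (PUC : forall t, (mu false false t * mu true true t
                    = mu false true t * mu true false t)%R).

Let mu_ge0 x y t : (0 <= mu x y t)%R. Proof. by case: (Pmu x y). Qed.
Let measurable_mu x y : measurable_fun setT (mu x y).
Proof. by case: (Pmu x y). Qed.

Lemma PUC_swap x y t :
  (mu false false t * mu true true t = mu x y t * mu (~~ x) (~~ y) t)%R.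
Proof.
by case: x; case: y => /=; [rewrite mulrC | rewrite PUC mulrC | rewrite PUC |].
Qed.

Lemma hellinger2_PUC : hellinger2 Q (mu false true) (mu true false)
  = hellinger2 Q (mu false false) (mu true true).
Proof. by congr (_ - _); apply: eq_integral => t _; rewrite PUC. Qed.

Let mu_sum t := (\sum_(xy : bool * bool) mu xy.1 xy.2 t)%R.

Let mu_le_sum x y t : (mu x y t <= mu_sum t)%R.
Proof.
rewrite /mu_sum (bigD1 (x, y)) //= lerDl.
by apply: sumr_ge0 => xy _; exact: mu_ge0.
Qed.

Let integral_mu_sum : \int[Q]_t (mu_sum t)%:E = 4%:E.
Proof.
under eq_integral do rewrite /mu_sum -sumEFin.
rewrite ge0_integral_sum //; last 2 first.
- by move=> xy; exact/measurable_EFinP.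
- by move=> xy t _; rewrite lee_fin.
under eq_bigr do rewrite (integral_density_setT (Pmu _ _)).
by rewrite sumEFin sumr_const card_prod card_bool.
Qed.

Section precluding_experiment.
Context {K : finType} {p : K -> T -> R} {eps : R} {c : K -> bool * bool}.
Hypotheses (measurable_p : forall k, measurable_fun setT (p k))
  (p_ge0 : forall k t, (0 <= p k t)%R)
  (p_sum1 : forall t, (\sum_(k : K) p k t)%R = 1%R)
  (precluded : forall k, \int[P (c k).1 (c k).2]_t (p k t)%:E <= eps%:E).

Let precluded_mass t := (\sum_(k : K) p k t * mu (c k).1 (c k).2 t)%R.

Let integral_precluded_mass :
  \int[Q]_t (precluded_mass t)%:E <= (#|K|%:R * eps)%:E.
Proof.
have mpmu k : measurable_fun setT (fun t => (p k t * mu (c k).1 (c k).2 t)%R).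
  exact: measurable_funM.
under eq_integral do rewrite /precluded_mass -sumEFin.
rewrite ge0_integral_sum //; last 2 first.
- by move=> k; exact/measurable_EFinP.
- by move=> k t _; rewrite lee_fin mulr_ge0.
have -> : (#|K|%:R * eps)%:E = \sum_(k : K) eps%:E.
  by rewrite sumEFin sumr_const mulr_natl.
apply: lee_sum => k _; apply: le_trans (precluded k).
under eq_integral do rewrite EFinM.
rewrite (integral_density (Pmu _ _)) //; first exact/measurable_EFinP.
by move=> t; rewrite lee_fin.
Qed.

Let sqrt_affinity_le r t : (0 < r)%R ->
  (Num.sqrt (mu false false t * mu true true t)
   <= precluded_mass t / r + r / 4 * mu_sum t)%R.
Proof.
move=> r0; set a := Num.sqrt _; set b := (r / 4 * mu_sum t)%R.
have average z : z = (\sum_(k : K) p k t * z)%R.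
  by rewrite -mulr_suml p_sum1 mul1r.
rewrite (average a) (average b) /precluded_mass mulr_suml -big_split.
apply: ler_sum => k _ /=; rewrite -mulrA -mulrDr; apply: ler_wpM2l => //.
case: (c k) => x y /=; rewrite /a /b (PUC_swap x y).
apply: le_trans (sqrt_mul_le_scaled r _ _ r0 (mu_ge0 _ _ _) (mu_ge0 _ _ _)) _.
rewrite lerD2l; apply: ler_wpM2l; last exact: mu_le_sum.
exact: divr_ge0 (ltW r0) _.
Qed.

Lemma integral_sqrt_affinity_le r : (0 < r)%R ->
  \int[Q]_t (Num.sqrt (mu false false t * mu true true t))%:E
    <= (#|K|%:R * eps / r + r)%:E.
Proof.
move=> r0.
have rV_ge0 : (0 <= r^-1)%R by rewrite invr_ge0 ltW.
have r4_ge0 : (0 <= r / 4)%R by rewrite divr_ge0 ?ltW.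
have pm_ge0 t : [set: T] t -> 0 <= (precluded_mass t)%:E.
  by move=> _; rewrite lee_fin; apply: sumr_ge0 => k _; rewrite mulr_ge0.
have sum_ge0 t : [set: T] t -> 0 <= (mu_sum t)%:E.
  by move=> _; rewrite lee_fin (le_trans (mu_ge0 true true t)) ?mu_le_sum.
have mpm : measurable_fun setT (fun t => (precluded_mass t)%:E).
  by apply/measurable_EFinP/measurable_sum => k; exact: measurable_funM.
have msum : measurable_fun setT (fun t => (mu_sum t)%:E).
  exact/measurable_EFinP/measurable_sum.
have pointwise : \int[Q]_t (Num.sqrt (mu false false t * mu true true t))%:E
    <= \int[Q]_t ((r^-1)%:E * (precluded_mass t)%:E
                   + (r / 4)%:E * (mu_sum t)%:E).
  apply: ge0_le_integral => //.
  - exact: measurable_sqrt_mul.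
  - by apply: emeasurable_funD; exact: emeasurable_funM.
  - move=> t _; rewrite -!EFinM -EFinD lee_fin [(r^-1 * _)%R]mulrC.
    exact: sqrt_affinity_le.
apply: le_trans pointwise _.
rewrite ge0_integralD //; last 4 first.
- by move=> t _; rewrite mule_ge0 ?pm_ge0.
- exact: emeasurable_funM.
- by move=> t _; rewrite mule_ge0 ?sum_ge0.
- exact: emeasurable_funM.
rewrite !ge0_integralZl_EFin // integral_mu_sum.
apply: le_trans (leeD (lee_wpmul2l _ integral_precluded_mass) (lexx _)) _.
  by rewrite lee_fin.
by rewrite -!EFinM -EFinD lee_fin mulrC divfK ?pnatr_eq0.
Qed.

End precluding_experiment.
End preparation_uninformative.

Theorem theorem2 (d : measure_display) (T : measurableType d) (R : realType)
  (P : bool -> bool -> probability T R)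
  (Q : {measure set T -> \bar R}) (mu : bool -> bool -> T -> R)
  (Hdens : forall x y, is_density Q (P x y) (mu x y))
  (HPUC : forall t, (mu false false t * mu true true t
                     = mu false true t * mu true false t)%R)
  (eps : R) (heps : (0 < eps)%R)
  (K : finType) (p : K -> T -> R)
  (Hpmeas : forall k, measurable_fun setT (p k))
  (Hp01 : forall k t, (0 <= p k t <= 1)%R)
  (Hpsum : forall t, (\sum_(k : K) p k t)%R = 1%R)
  (Hprecl : forall k, exists x y, \int[P x y]_t (p k t)%:E <= eps%:E) :
  let bound := (1 - 2 * Num.sqrt (#|K|%:R * eps))%:E in
  [/\ hellinger2 Q (mu false false) (mu true true)
        <= tv_dist (P false false) (P true true),
      bound <= hellinger2 Q (mu false false) (mu true true),
      hellinger2 Q (mu false true) (mu true false)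
        <= tv_dist (P false true) (P true false)
    & bound <= hellinger2 Q (mu false true) (mu true false)].
Proof.
move=> bound.
have /choice[c precluded] : forall k, exists xy : bool * bool,
    \int[P xy.1 xy.2]_t (p k t)%:E <= eps%:E.
  by move=> k; have [x [y ?]] := Hprecl k; exists (x, y).
have p_ge0 k t : (0 <= p k t)%R by case/andP: (Hp01 k t).
have [t0 _] := probability_setT_neq0 (P false false).
have K_gt0 : (0 < #|K|)%N.
  rewrite lt0n; apply/eqP => /card0_eq K0.
  by move: (Hpsum t0); rewrite big_pred0 // => /esym/eqP; rewrite oner_eq0.
set r := Num.sqrt (#|K|%:R * eps).
have r_gt0 : (0 < r)%R by rewrite sqrtr_gt0 mulr_gt0 ?ltr0n.
have := integral_sqrt_affinity_le Hdens HPUC Hpmeas p_ge0 Hpsum precluded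
  _ r_gt0.
have -> : (#|K|%:R * eps / r + r = 2 * r)%R.
  rewrite -[X in (X / r)%R]sqr_sqrtr ?mulr_ge0 ?(ltW heps) // -/r.
  by field; rewrite gt_eqF.
move=> /(leeB (lexx 1)); rewrite -EFinB -/bound => bound_le.
split => //; try exact: hellinger2_le_tv_dist.
by rewrite (hellinger2_PUC HPUC).
Qed.
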